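(* Let $(B,+,\circ)$ be a left brace with Yang–Baxter map $r$, let $X\subseteq B$ be such that $(X,r)$ is a solution of the set-theoretic Yang–Baxter equation, and let $c\in B$ be central in $(B,\circ)$. (1) If $k_1(x)=c\circ x-c$ satisfies $k_1(X)\subseteq X$ and $c^2=c\circ c\in\mathrm{Soc}(B)$, then $k_1:X\to X$ is a reflection of $(X,r)$ with $k_1\circ k_1=\mathrm{id}_X$; in particular this holds if $c\circ c=0$. (2) If $2\,(c\circ x)=2c+2x$ for all $x\in X$, $c\circ c=0$, and $k_2(x)=c\circ x+c$ satisfies $k_2(X)\subseteq X$, then $k_2:X\to X$ is a reflection of $(X,r)$ with $k_2\circ k_2=\mathrm{id}_X$.
   Context: A (left) brace is a triple $(B,+,\circ)$ such that $(B,+)$ is an abelian group with identity $0$ (which is also the identity of $(B,\circ)$), $(B,\circ)$ is a group, and $x\circ(y+z)=x\circ y+x\circ z-x$ for all $x,y,z\in B$. The Yang–Baxter map is $r(x,y)=(\sigma_x(y),\tau_y(x))$ with $\sigma_x(y)=x\circ y-x$ and $\tau_y(x)=(\sigma_x(y))^{-1}\circ x-(\sigma_x(y))^{-1}$. For $X\subseteq B$, $(X,r)$ is a solution of the set-theoretic Yang–Baxter equation if $r(X\times X)\subseteq X\times X$ and $(\mathrm{id}\times r)(r\times\mathrm{id})(\mathrm{id}\times r)=(r\times\mathrm{id})(\mathrm{id}\times r)(r\times\mathrm{id})$ on $X^3$. A map $k:X\to X$ is a reflection of $(X,r)$ if $r(\mathrm{id}\times k)r(\mathrm{id}\times k)=(\mathrm{id}\times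 k)r(\mathrm{id}\times k)r$ on $X\times X$. $\mathrm{Soc}(B)=\{a\in B: a\circ b=a+b\ \forall b\in B\}$. *)

From HB Require Import structures.
From mathcomp Require Import all_boot all_order all_algebra.
Set Implicit Arguments. Unset Strict Implicit. Unset Printing Implicit Defensive.
Import GRing.Theory.
Local Open Scope ring_scope.

Definition is_brace (B : zmodType) (circ : B -> B -> B) (inv : B -> B) : Prop :=
  [/\ (forall x y z, circ x (circ y z) = circ (circ x y) z),
      (forall x, circ 0 x = x /\ circ x 0 = x),
      (forall x, circ (inv x) x = 0 /\ circ x (inv x) = 0) &
      (forall x y z, circ x (y + z) = circ x y + circ x z - x)].

Section YB.
Variables (B : zmodType) (circ : B -> B -> B) (inv : B -> B).

Definition bsigma (x y : B) : B := circ x y - x.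
Definition btau (y x : B) : B := circ (inv (bsigma x y)) x - inv (bsigma x y).
Definition yb_map (p : B * B) : B * B := (bsigma p.1 p.2, btau p.2 p.1).

Definition r12 (t : B * B * B) : B * B * B :=
  let: (x, y, z) := t in let: (a, b) := yb_map (x, y) in (a, b, z).
Definition r23 (t : B * B * B) : B * B * B :=
  let: (x, y, z) := t in let: (a, b) := yb_map (y, z) in (x, a, b).

Definition is_solution (X : B -> Prop) : Prop :=
  (forall x y, X x -> X y -> X (yb_map (x, y)).1 /\ X (yb_map (x, y)).2) /\
  (forall x y z, X x -> X y -> X z ->
     r23 (r12 (r23 (x, y, z))) = r12 (r23 (r12 (x, y, z)))).

Definition idk (k : B -> B) (p : B * B) : B * B := (p.1, k p.2).

Definition is_reflection (X : B -> Prop) (k : B -> B) : Prop :=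
  (forall x, X x -> X (k x)) /\
  (forall x y, X x -> X y ->
     yb_map (idk k (yb_map (idk k (x, y)))) = idk k (yb_map (idk k (yb_map (x, y))))).

Definition in_soc (a : B) : Prop := forall b, circ a b = a + b.

End YB.

(* Writing lambda_a(z) = a o z - a (the map [bsigma a]), the brace axiom says that each
   lambda_a is additive and that a |-> lambda_a is a homomorphism from (B, o) to Aut(B, +).
   Both k_1 = lambda_c and k_2 = lambda_c + 2c commute with every lambda_w, w in X: for k_1
   because c is central, for k_2 because moreover lambda_w fixes 2c.  Any map commuting with
   all lambda_w (w in X) is a reflection, since r(x, y) = (lambda_x y, lambda_{(lambda_x y)^-} x).
   Finally k_1 o k_1 = lambda_{c o c} and k_2 o k_2 = lambda_{c o c} + 2 (c o c). *)
From mathcomp Require Import all_boot all_order all_algebra.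
Set Implicit Arguments. Unset Strict Implicit. Unset Printing Implicit Defensive.
Import GRing.Theory.
Local Open Scope ring_scope.

Lemma solution_bsigma_closed (B : zmodType) (circ : B -> B -> B) (inv : B -> B)
    (X : B -> Prop) :
  is_solution circ inv X -> forall x y, X x -> X y -> X (bsigma circ x y).
Proof. by move=> [closed _] x y Xx Xy; case: (closed x y Xx Xy). Qed.

Section Brace.
Variables (B : zmodType) (circ : B -> B -> B) (inv : B -> B).
Hypothesis brace : is_brace circ inv.

Local Notation sigma := (bsigma circ).

Lemma bsigmaD a y z : sigma a (y + z) = sigma a y + sigma a z.
Proof.
case: brace => _ _ _ circD; rewrite /bsigma circD.
by rewrite addrACA -[in LHS]addrA [- a + _]addrC addrA.
Qed.

Lemma bsigmaMn2 a y : sigma a (y *+ 2) = sigma a y *+ 2.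
Proof. by rewrite !mulr2n bsigmaD. Qed.

Lemma bsigma_comp a b z : sigma a (sigma b z) = sigma (circ a b) z.
Proof.
case: brace => circA _ _ circD.
have := circD a (circ b z - b) b; rewrite subrK => E.
by rewrite /bsigma -circA E addrAC addrK.
Qed.

Lemma bsigma0 z : sigma 0 z = z.
Proof. by case: brace => _ circ0 _ _; rewrite /bsigma (proj1 (circ0 z)) subr0. Qed.

Lemma bsigmaK p z : sigma (inv p) (sigma p z) = z.
Proof. by case: brace => _ _ circV _; rewrite bsigma_comp (proj1 (circV p)) bsigma0. Qed.

Lemma bsigmaVK p z : sigma p (sigma (inv p) z) = z.
Proof. by case: brace => _ _ circV _; rewrite bsigma_comp (proj2 (circV p)) bsigma0. Qed.

Lemma bsigma_soc a z : in_soc circ a -> sigma a z = z.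
Proof. by move=> soc; rewrite /bsigma soc addrC addKr. Qed.

Lemma in_soc0 : in_soc circ 0.
Proof. by case: brace => _ circ0 _ _ b; rewrite (proj1 (circ0 b)) add0r. Qed.

Lemma bsigmaV_comm (k : B -> B) p :
  (forall z, sigma p (k z) = k (sigma p z)) ->
  forall z, sigma (inv p) (k z) = k (sigma (inv p) z).
Proof. by move=> kp z; rewrite -{1}[z](bsigmaVK p) -kp bsigmaK. Qed.

Lemma reflection_of_bsigma_comm (X : B -> Prop) (k : B -> B) :
  (forall x y, X x -> X y -> X (sigma x y)) ->
  (forall x, X x -> X (k x)) ->
  (forall w z, X w -> sigma w (k z) = k (sigma w z)) ->
  is_reflection circ inv X k.
Proof.
move=> sX kX kcomm; split=> // x y Xx Xy.
rewrite /idk /yb_map /btau /=.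
set u := sigma x (k y); set a := sigma x y.
have Xu : X u by apply: sX => //; apply: kX.
have Xa : X a by apply: sX.
have ku : sigma u (k (sigma (inv u) x)) = k x by rewrite kcomm // bsigmaVK.
have ka : sigma a (k (sigma (inv a) x)) = k x by rewrite kcomm // bsigmaVK.
rewrite ku ka; congr (_, _).
have kV := bsigmaV_comm (fun z => kcomm _ z (kX x Xx)).
by rewrite -[LHS]/(sigma _ u) -[RHS]/(k (sigma _ a)) /u kcomm // kV.
Qed.

Lemma circ_add_bsigma a z : circ a z + a = sigma a z + a *+ 2.
Proof. by rewrite /bsigma mulr2n addrA subrK. Qed.

Lemma circ_add_comp_self a x :
  circ a (circ a x + a) + a = sigma (circ a a) x + (circ a a) *+ 2.
Proof.
rewrite !circ_add_bsigma bsigmaD bsigma_comp -addrA bsigmaMn2.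
by rewrite -mulrnDl subrK.
Qed.

Section Central.
Variable c : B.
Hypothesis c_central : forall x, circ c x = circ x c.

Lemma bsigma_central_comm w z : sigma w (sigma c z) = sigma c (sigma w z).
Proof. by rewrite !bsigma_comp c_central. Qed.

Lemma bsigma_fix_double w :
  (circ c w) *+ 2 = c *+ 2 + w *+ 2 -> sigma w (c *+ 2) = c *+ 2.
Proof. by move=> h2; rewrite bsigmaMn2 /bsigma mulrnBl -c_central h2 addrK. Qed.

Lemma bsigma_circ_add_comm w z :
  sigma w (c *+ 2) = c *+ 2 -> sigma w (circ c z + c) = circ c (sigma w z) + c.
Proof. by move=> fix2; rewrite !circ_add_bsigma bsigmaD fix2 bsigma_central_comm. Qed.

End Central.
End Brace.

Theorem mainTheorem11 (B : zmodType) (circ : B -> B -> B) (inv : B -> B)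
  (X : B -> Prop) (c : B) :
  is_brace circ inv ->
  is_solution circ inv X ->
  (forall x, circ c x = circ x c) ->
  (* (1) *)
  ((forall x, X x -> X (circ c x - c)) ->
   in_soc circ (circ c c) ->
   is_reflection circ inv X (fun x => circ c x - c) /\
   (forall x, X x -> circ c (circ c x - c) - c = x)) /\
  (* (1), in particular when c o c = 0 *)
  ((forall x, X x -> X (circ c x - c)) ->
   circ c c = 0 ->
   is_reflection circ inv X (fun x => circ c x - c) /\
   (forall x, X x -> circ c (circ c x - c) - c = x)) /\
  (* (2) *)
  ((forall x, X x -> (circ c x) *+ 2 = c *+ 2 + x *+ 2) ->
   circ c c = 0 ->
   (forall x, X x -> X (circ c x + c)) ->
   is_reflection circ inv X (fun x => circ c x + c) /\
   (forall x, X x -> circ c (circ c x + c) + c = x)).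
Proof.
move=> brace sol central; have sX := solution_bsigma_closed sol.
have part1 : (forall x, X x -> X (circ c x - c)) -> in_soc circ (circ c c) ->
    is_reflection circ inv X (bsigma circ c) /\
    (forall x, X x -> bsigma circ c (bsigma circ c x) = x).
  move=> k1X soc; split.
    apply: (reflection_of_bsigma_comm brace sX k1X) => w z _.
    exact: (bsigma_central_comm brace central).
  by move=> x _; rewrite (bsigma_comp brace) (bsigma_soc _ soc).
split=> //; split=> [k1X cc0 | double cc0 k2X].
  by apply: part1 => //; rewrite cc0; apply: (in_soc0 brace).
split=> [|x _].
  apply: (reflection_of_bsigma_comm brace sX k2X) => w z Xw.
  apply: (bsigma_circ_add_comm brace central).
  exact: (bsigma_fix_double brace central (double w Xw)).
by rewrite (circ_add_comp_self brace) cc0 mul0rn addr0 (bsigma0 brace).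
Qed.
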